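(* Let $\mathfrak{n}$ be the real $7$-dimensional Lie algebra with basis $e_1,\dots,e_7$ whose nonzero brackets (up to antisymmetry) are $[e_1,e_2]=e_3$, $[e_1,e_3]=e_5$, $[e_1,e_4]=e_6$, $[e_1,e_5]=e_7$, $[e_1,e_6]=e_7$, $[e_2,e_3]=e_7$. Then $\mathfrak{n}$ is an Einstein nilradical.
   Context: A real nilpotent Lie algebra $\mathfrak{n}$ is called an Einstein nilradical if it admits an inner product such that the left-invariant Riemannian metric it defines on the simply connected nilpotent Lie group with Lie algebra $\mathfrak{n}$ is a nilsoliton, i.e. its Ricci operator satisfies $\mathrm{Ric}=c\,\mathrm{Id}+D$ for some $c\in\mathbb{R}$ and some derivation $D$ of $\mathfrak{n}$. Brackets of basis elements not listed are zero. *)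

From HB Require Import structures.
From mathcomp Require Import all_boot all_order all_algebra.
From mathcomp Require Import reals.
Set Implicit Arguments. Unset Strict Implicit. Unset Printing Implicit Defensive.
Import Order.TTheory GRing.Theory Num.Theory.
Local Open Scope ring_scope.

Section LieDefs.
Variables (R : realType) (n : nat).

Definition e (i : 'I_n) : 'rV[R]_n := delta_mx 0 i.

Definition ipG (G : 'M[R]_n) (x y : 'rV[R]_n) : R := (x *m G *m y^T) 0 0.

Definition is_inner_product (G : 'M[R]_n) : Prop :=
  G^T = G /\ forall x : 'rV[R]_n, x != 0 -> 0 < ipG G x x.

Definition bracket_of (c : 'I_n -> 'I_n -> 'rV[R]_n) (x y : 'rV[R]_n) : 'rV[R]_n :=
  \sum_(i < n) \sum_(j < n) (x 0 i * y 0 j) *: c i j.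

Definition is_derivation (br : 'rV[R]_n -> 'rV[R]_n -> 'rV[R]_n) (D : 'M[R]_n) : Prop :=
  forall x y, br x y *m D = br (x *m D) y + br x (y *m D).

(* Ricci form of the left-invariant metric on a nilpotent Lie algebra:
   ric(x,y) = -1/2 sum_{i,j} <[x,f_i],f_j><[y,f_i],f_j>
              + 1/4 sum_{i,j} <[f_i,f_j],x><[f_i,f_j],y>
   for an orthonormal basis (f_i); written basis-free using G^{-1}
   (sum_i B(f_i,f_i) = sum_{k,l} (G^{-1})_{kl} B(e_k,e_l)). *)
Definition ric_form (br : 'rV[R]_n -> 'rV[R]_n -> 'rV[R]_n) (G : 'M[R]_n)
    (x y : 'rV[R]_n) : R :=
  let Gi := invmx G in
  - (1 / 2) * (\sum_(k < n) \sum_(l < n) Gi k l * ipG G (br x (e k)) (br y (e l)))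
  + (1 / 4) * (\sum_(k < n) \sum_(l < n) \sum_(p < n) \sum_(q < n)
        Gi k p * Gi l q * ipG G (br (e k) (e l)) x * ipG G (br (e p) (e q)) y).

(* Ric = c Id + D with D a derivation; Ric is the G-symmetric operator with
   <Ric x, y> = ric(x,y). *)
Definition is_nilsoliton (br : 'rV[R]_n -> 'rV[R]_n -> 'rV[R]_n) (G : 'M[R]_n) : Prop :=
  exists (c : R) (D : 'M[R]_n), is_derivation br D /\
    forall x y, ric_form br G x y = ipG G (c *: x + x *m D) y.

Definition Einstein_nilradical (br : 'rV[R]_n -> 'rV[R]_n -> 'rV[R]_n) : Prop :=
  exists G : 'M[R]_n, is_inner_product G /\ is_nilsoliton br G.

End LieDefs.

(* The 7-dim algebra; index k (0-based) stands for e_{k+1}.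
   [e1,e2]=e3, [e1,e3]=e5, [e1,e4]=e6, [e1,e5]=e7, [e1,e6]=e7, [e2,e3]=e7 *)
Definition n7_table (i j : nat) : option nat :=
  match i, j with
  | 0, 1 => Some 2%N | 0, 2 => Some 4%N | 0, 3 => Some 5%N
  | 0, 4 => Some 6%N | 0, 5 => Some 6%N | 1, 2 => Some 6%N
  | _, _ => None
  end.

Definition n7_const (R : realType) (i j : 'I_7) : 'rV[R]_7 :=
  match n7_table i j, n7_table j i with
  | Some k, _ => @e R 7 (inord k)
  | None, Some k => - @e R 7 (inord k)
  | None, None => 0
  end.

Definition n7_bracket (R : realType) := bracket_of (@n7_const R).

From mathcomp Require Import all_boot all_order all_algebra.
From mathcomp Require Import reals.
From mathcomp Require Import ring lra.
Set Implicit Arguments. Unset Strict Implicit. Unset Printing Implicit Defensive.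
Import Order.TTheory GRing.Theory Num.Theory.
Local Open Scope ring_scope.

(* The algebra is graded by deg e1 = 1, deg e2 = 2, deg e3 = deg e4 = 3,
   deg e5 = deg e6 = 4, deg e7 = 5, so every multiple of the grading operator
   is a derivation.  Solving the nilsoliton equations among metrics that are
   block diagonal along this grading gives the Gram matrix [gram] below, with
   blocks [[45,15],[15,45]] on <e3,e4> and [[360,240],[240,360]] on <e5,e6>,
   for which Ric = -20 Id + (11/2) diag(1,2,3,3,4,4,5). *)

Definition o0 : 'I_7 := @Ordinal 7 0 isT.
Definition o1 : 'I_7 := @Ordinal 7 1 isT.
Definition o2 : 'I_7 := @Ordinal 7 2 isT.
Definition o3 : 'I_7 := @Ordinal 7 3 isT.
Definition o4 : 'I_7 := @Ordinal 7 4 isT.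
Definition o5 : 'I_7 := @Ordinal 7 5 isT.
Definition o6 : 'I_7 := @Ordinal 7 6 isT.

Lemma big_ord7 (V : nmodType) (F : 'I_7 -> V) :
  \sum_(k < 7) F k = F o0 + F o1 + F o2 + F o3 + F o4 + F o5 + F o6.
Proof.
rewrite !big_ord_recl big_ord0 addr0 !addrA /=.
by do 7? (congr (_ + _) || (congr F; apply: val_inj)).
Qed.

Lemma ord7_cases (P : 'I_7 -> Prop) :
  P o0 -> P o1 -> P o2 -> P o3 -> P o4 -> P o5 -> P o6 -> forall m, P m.
Proof.
move=> P0 P1 P2 P3 P4 P5 P6 [m Hm].
by case: m Hm => [|[|[|[|[|[|[|//]]]]]]] Hm; rewrite (bool_irrelevance Hm isT).
Qed.

Lemma inord_eqE n (k : nat) (m : 'I_n.+1) : (k <= n)%N -> (m == inord k) = (m == k :> nat).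
Proof. by move=> hk; rewrite -val_eqE /= inordK. Qed.

Lemma invmx_right_inverse (R : comUnitRingType) n (A B : 'M[R]_n) :
  A *m B = 1%:M -> invmx A = B.
Proof.
move=> AB1; have [uA _] := mulmx1_unit AB1.
by rewrite -[RHS]mul1mx -(mulVmx uA) -mulmxA AB1 mulmx1.
Qed.

Lemma sum_quad_nested (R : comNzRingType) n (M : 'M[R]_n) (A B : 'I_n -> 'I_n -> R) :
  \sum_(k < n) \sum_(l < n) \sum_(p < n) \sum_(q < n) M k p * M l q * A k l * B p q =
  \sum_(k < n) \sum_(p < n) M k p * (\sum_(l < n) \sum_(q < n) M l q * (A k l * B p q)).
Proof.
apply: eq_bigr => k _; rewrite exchange_big /=.
apply: eq_bigr => p _; rewrite mulr_sumr; apply: eq_bigr => l _.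
rewrite mulr_sumr; apply: eq_bigr => q _; ring.
Qed.

Lemma e_entry (R : realType) n (i j : 'I_n) : @e R n i 0 j = (j == i)%:R.
Proof. by rewrite mxE eqxx. Qed.

Section N7Soliton.
Variable R : realType.

Local Notation e := (@e R 7).
Local Notation br := (@n7_bracket R).

Definition n7_bracket_coord (m : nat) (x y : 'rV[R]_7) : R :=
  match m with
  | 2 => x 0 o0 * y 0 o1 - x 0 o1 * y 0 o0
  | 4 => x 0 o0 * y 0 o2 - x 0 o2 * y 0 o0
  | 5 => x 0 o0 * y 0 o3 - x 0 o3 * y 0 o0
  | 6 => x 0 o0 * y 0 o4 - x 0 o4 * y 0 o0 + x 0 o0 * y 0 o5 - x 0 o5 * y 0 o0
         + x 0 o1 * y 0 o2 - x 0 o2 * y 0 o1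
  | _ => 0
  end.

Lemma n7_bracketE x y : br x y = \row_(m < 7) n7_bracket_coord m x y.
Proof.
apply/rowP; apply: ord7_cases;
rewrite mxE /n7_bracket /bracket_of summxE big_ord7 !summxE !big_ord7 !mxE
  !inord_eqE // /n7_bracket_coord /=; ring.
Qed.

Definition grading_weight (i : nat) : R :=
  match i with
  | 0 => 11 / 2 | 1 => 11 | 2 | 3 => 33 / 2 | 4 | 5 => 22 | _ => 55 / 2
  end.

Definition soliton_der : 'M[R]_7 := \matrix_(i, j) if i == j then grading_weight i else 0.

Lemma soliton_der_derivation : is_derivation br soliton_der.
Proof.
move=> x y; rewrite !n7_bracketE; apply/rowP; apply: ord7_cases;
rewrite !mxE ?big_ord7 ?mxE /n7_bracket_coord /= ?mxE ?big_ord7 ?mxE /grading_weight /=;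
by field.
Qed.

Definition gram_entry (i j : nat) : R :=
  match i, j with
  | 0, 0 => 1 | 1, 1 => 5 | 2, 2 | 3, 3 => 45 | 2, 3 | 3, 2 => 15
  | 4, 4 | 5, 5 => 360 | 4, 5 | 5, 4 => 240 | 6, 6 => 1800
  | _, _ => 0
  end.

Definition gram : 'M[R]_7 := \matrix_(i, j) gram_entry i j.

Definition gram_form (u v : 'rV[R]_7) : R :=
  u 0 o0 * v 0 o0 + 5 * (u 0 o1 * v 0 o1)
  + 45 * (u 0 o2 * v 0 o2) + 15 * (u 0 o2 * v 0 o3) + 15 * (u 0 o3 * v 0 o2)
  + 45 * (u 0 o3 * v 0 o3)
  + 360 * (u 0 o4 * v 0 o4) + 240 * (u 0 o4 * v 0 o5) + 240 * (u 0 o5 * v 0 o4)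
  + 360 * (u 0 o5 * v 0 o5) + 1800 * (u 0 o6 * v 0 o6).

Lemma ipG_gram u v : ipG gram u v = gram_form u v.
Proof. by rewrite /ipG !mxE big_ord7 !mxE !big_ord7 !mxE /gram_form /gram_entry /=; ring. Qed.

Lemma gram_sym : gram^T = gram.
Proof. by apply/matrixP; apply: ord7_cases; apply: ord7_cases; rewrite !mxE. Qed.

Lemma gram_form_sum_squares x : gram_form x x =
  x 0 o0 ^+ 2 + 5 * x 0 o1 ^+ 2 + 15 * (x 0 o2 + x 0 o3) ^+ 2
  + 30 * x 0 o2 ^+ 2 + 30 * x 0 o3 ^+ 2 + 240 * (x 0 o4 + x 0 o5) ^+ 2
  + 120 * x 0 o4 ^+ 2 + 120 * x 0 o5 ^+ 2 + 1800 * x 0 o6 ^+ 2.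
Proof. by rewrite /gram_form; ring. Qed.

Lemma gram_inner_product : is_inner_product gram.
Proof.
split=> [|x x_neq0]; first exact: gram_sym.
have [i xi_neq0] : exists i, x 0 i != 0.
  apply/existsP; apply: contraR x_neq0 => /existsPn x0.
  by apply/eqP/rowP => j; rewrite mxE; apply/eqP/negPn.
have xi2_gt0 : 0 < x 0 i ^+ 2 by rewrite lt0r sqr_ge0 sqrf_eq0 xi_neq0.
rewrite ipG_gram gram_form_sum_squares.
have := sqr_ge0 (x 0 o0); have := sqr_ge0 (x 0 o1); have := sqr_ge0 (x 0 o2);
have := sqr_ge0 (x 0 o3); have := sqr_ge0 (x 0 o4); have := sqr_ge0 (x 0 o5);
have := sqr_ge0 (x 0 o6); have := sqr_ge0 (x 0 o2 + x 0 o3);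
have := sqr_ge0 (x 0 o4 + x 0 o5).
by move: i xi_neq0 xi2_gt0; apply: ord7_cases => _ ?; lra.
Qed.

Definition gram_inv_entry (i j : nat) : R :=
  match i, j with
  | 0, 0 => 1 | 1, 1 => 1 / 5 | 2, 2 | 3, 3 => 1 / 40 | 2, 3 | 3, 2 => - (1 / 120)
  | 4, 4 | 5, 5 => 1 / 200 | 4, 5 | 5, 4 => - (1 / 300) | 6, 6 => 1 / 1800
  | _, _ => 0
  end.

Lemma invmx_gram : invmx gram = \matrix_(i, j) gram_inv_entry i j.
Proof.
apply: invmx_right_inverse; apply/matrixP; apply: ord7_cases; apply: ord7_cases;
by rewrite !mxE big_ord7 !mxE /gram_entry /gram_inv_entry /=; field.
Qed.

Lemma sum_invmx_gram (H : 'I_7 -> 'I_7 -> R) :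
  \sum_(k < 7) \sum_(l < 7) invmx gram k l * H k l =
  H o0 o0 + 1 / 5 * H o1 o1 + 1 / 40 * H o2 o2 - 1 / 120 * H o2 o3
  - 1 / 120 * H o3 o2 + 1 / 40 * H o3 o3 + 1 / 200 * H o4 o4
  - 1 / 300 * H o4 o5 - 1 / 300 * H o5 o4 + 1 / 200 * H o5 o5 + 1 / 1800 * H o6 o6.
Proof. by rewrite invmx_gram big_ord7 !big_ord7 !mxE /gram_inv_entry /=; field. Qed.

Lemma ric_first_sum x y :
  \sum_(k < 7) \sum_(l < 7) invmx gram k l * ipG gram (br x (e k)) (br y (e l)) =
  29 * (x 0 o0 * y 0 o0) + 90 * (x 0 o1 * y 0 o1) + 720 * (x 0 o2 * y 0 o2)
  + 240 * (x 0 o2 * y 0 o3 + x 0 o3 * y 0 o2) + 360 * (x 0 o3 * y 0 o3)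
  + 1800 * ((x 0 o4 + x 0 o5) * (y 0 o4 + y 0 o5)).
Proof.
by rewrite sum_invmx_gram !ipG_gram /gram_form !n7_bracketE !mxE /n7_bracket_coord /=
  !e_entry /=; field.
Qed.

Definition bracket_pairing (k l : nat) (x : 'rV[R]_7) : R :=
  let x2 := 45 * x 0 o2 + 15 * x 0 o3 in
  let x4 := 360 * x 0 o4 + 240 * x 0 o5 in
  let x5 := 240 * x 0 o4 + 360 * x 0 o5 in
  let x6 := 1800 * x 0 o6 in
  match k, l with
  | 0, 1 => x2 | 1, 0 => - x2
  | 0, 2 => x4 | 2, 0 => - x4
  | 0, 3 => x5 | 3, 0 => - x5
  | 0, 4 | 0, 5 | 1, 2 => x6 | 4, 0 | 5, 0 | 2, 1 => - x6
  | _, _ => 0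
  end.

Lemma ipG_bracket_basis (k l : 'I_7) x :
  ipG gram (br (e k) (e l)) x = bracket_pairing k l x.
Proof.
move: k l; apply: ord7_cases; apply: ord7_cases;
by rewrite ipG_gram /gram_form n7_bracketE !mxE /n7_bracket_coord /= !e_entry
  /bracket_pairing /=; ring.
Qed.

(* [540 * 100] rather than [54000]: numerals in ring_scope are unary naturals. *)
Lemma ric_second_sum x y :
  \sum_(k < 7) \sum_(l < 7) \sum_(p < 7) \sum_(q < 7)
     invmx gram k p * invmx gram l q * ipG gram (br (e k) (e l)) x *
       ipG gram (br (e p) (e q)) y =
  810 * (x 0 o2 * y 0 o2) + 270 * (x 0 o2 * y 0 o3 + x 0 o3 * y 0 o2)
  + 90 * (x 0 o3 * y 0 o3) + (648 * 10) * (x 0 o4 * y 0 o4)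
  + (552 * 10) * (x 0 o4 * y 0 o5 + x 0 o5 * y 0 o4) + (648 * 10) * (x 0 o5 * y 0 o5)
  + (540 * 100) * (x 0 o6 * y 0 o6).
Proof.
rewrite (sum_quad_nested _ (fun k l => ipG gram (br (e k) (e l)) x)
                           (fun p q => ipG gram (br (e p) (e q)) y)).
by rewrite sum_invmx_gram !sum_invmx_gram !ipG_bracket_basis /bracket_pairing /=; field.
Qed.

Lemma gram_nilsoliton x y :
  ric_form br gram x y = ipG gram ((-20) *: x + x *m soliton_der) y.
Proof.
rewrite /ric_form ric_first_sum ric_second_sum ipG_gram /gram_form.
by rewrite !mxE !big_ord7 !mxE /grading_weight /=; field.
Qed.

End N7Soliton.

Theorem mainTheorem15 (R : realType) : Einstein_nilradical (@n7_bracket R).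
Proof.
exists (gram R); split; first exact: gram_inner_product.
exists (-20), (soliton_der R); split; [exact: soliton_der_derivation | exact: gram_nilsoliton].
Qed.
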